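(* Let $(\mathcal C,\otimes,I)$ be a symmetric monoidal category and $M$ a commutative monad on $\mathcal C$. Then every symmetric Eilenberg--Moore $M$-monoid is an Eilenberg--Moore $M$-monoid.
   Context: Symmetry is $\mathsf{sym}: X\otimes Y\to Y\otimes X$. $M$ is a strong monad with (right) strength $\tau_{X,Y}: MX\otimes Y\to M(X\otimes Y)$ satisfying the usual laws; its left strength is $\tau'_{X,Y}=M\mathsf{sym}\circ\tau_{Y,X}\circ\mathsf{sym}: X\otimes MY\to M(X\otimes Y)$. $M$ is commutative if $\mu\circ M\tau\circ\tau' = \mu\circ M\tau'\circ\tau: MX\otimes MY\to M(X\otimes Y)$ for all $X,Y$. A symmetric Eilenberg--Moore $M$-monoid is a tuple $\langle A,a: MA\to A,m: A\otimes A\to A,u: I\to A\rangle$ such that $\langle A,a\rangle$ is an Eilenberg--Moore $M$-algebra, $\langle A,m,u\rangle$ is a monoid, and $a\circ Mm\circ\mu_{A\otimes A}\circ M\tau'_{A,A}\circ\tau_{A,MA} = m\circ(a\otimes a): MA\otimes MA\to A$. An Eilenberg--Moore $M$-monoid is a tuple $\langle A,a,m,u\rangle$ such that $\langle A,a\rangle$ is an Eilenberg--Moore $M$-algebra, $\langle A,m,u\rangle$ is a monoid, and $m\circ(a\otimes \mathrm{id}_A)=a\circ Mm\circ\tau_{A,A}: MA\otimes A\to A$. *)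

Set Implicit Arguments.
Unset Strict Implicit.

Record Category := {
  ob :> Type;
  hom : ob -> ob -> Type;
  idm : forall X, hom X X;
  comp : forall X Y Z, hom Y Z -> hom X Y -> hom X Z;
  comp_id_l : forall X Y (f : hom X Y), comp (idm Y) f = f;
  comp_id_r : forall X Y (f : hom X Y), comp f (idm X) = f;
  comp_assoc : forall X Y Z W (f : hom Z W) (g : hom Y Z) (h : hom X Y),
      comp f (comp g h) = comp (comp f g) h
}.

Arguments hom {C} : rename.
Arguments idm {C} X : rename.
Arguments comp {C X Y Z} : rename.
Notation "g \o f" := (comp g f) (at level 40, left associativity).

Record SymMonCat := {
  cat :> Category;
  tens : cat -> cat -> cat;
  tensm : forall X X' Y Y', hom X X' -> hom Y Y' -> hom (tens X Y) (tens X' Y');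
  unitI : cat;
  tensm_id : forall X Y, tensm (idm X) (idm Y) = idm (tens X Y);
  tensm_comp : forall X X' X'' Y Y' Y'' (f : hom X X') (f' : hom X' X'')
      (g : hom Y Y') (g' : hom Y' Y''),
      tensm (f' \o f) (g' \o g) = tensm f' g' \o tensm f g;
  assoc : forall X Y Z, hom (tens (tens X Y) Z) (tens X (tens Y Z));
  assoc_inv : forall X Y Z, hom (tens X (tens Y Z)) (tens (tens X Y) Z);
  assoc_iso1 : forall X Y Z, assoc_inv X Y Z \o assoc X Y Z = idm _;
  assoc_iso2 : forall X Y Z, assoc X Y Z \o assoc_inv X Y Z = idm _;
  assoc_nat : forall X X' Y Y' Z Z' (f : hom X X') (g : hom Y Y') (h : hom Z Z'),
      assoc X' Y' Z' \o tensm (tensm f g) h = tensm f (tensm g h) \o assoc X Y Z;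
  lunit : forall X, hom (tens unitI X) X;
  lunit_inv : forall X, hom X (tens unitI X);
  lunit_iso1 : forall X, lunit_inv X \o lunit X = idm _;
  lunit_iso2 : forall X, lunit X \o lunit_inv X = idm _;
  lunit_nat : forall X X' (f : hom X X'), lunit X' \o tensm (idm unitI) f = f \o lunit X;
  runit : forall X, hom (tens X unitI) X;
  runit_inv : forall X, hom X (tens X unitI);
  runit_iso1 : forall X, runit_inv X \o runit X = idm _;
  runit_iso2 : forall X, runit X \o runit_inv X = idm _;
  runit_nat : forall X X' (f : hom X X'), runit X' \o tensm f (idm unitI) = f \o runit X;
  pentagon : forall W X Y Z,
      tensm (idm W) (assoc X Y Z) \o assoc W (tens X Y) Z \o tensm (assoc W X Y) (idm Z)
      = assoc W X (tens Y Z) \o assoc (tens W X) Y Z;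
  triangle : forall X Y,
      tensm (idm X) (lunit Y) \o assoc X unitI Y = tensm (runit X) (idm Y);
  sym : forall X Y, hom (tens X Y) (tens Y X);
  sym_inv : forall X Y, sym Y X \o sym X Y = idm _;
  sym_nat : forall X X' Y Y' (f : hom X X') (g : hom Y Y'),
      sym X' Y' \o tensm f g = tensm g f \o sym X Y;
  hexagon : forall X Y Z,
      assoc Y Z X \o sym X (tens Y Z) \o assoc X Y Z
      = tensm (idm Y) (sym X Z) \o assoc Y X Z \o tensm (sym X Y) (idm Z)
}.

Arguments tens {s} : rename.
Arguments tensm {s X X' Y Y'} : rename.
Arguments unitI {s} : rename.
Arguments assoc {s} : rename.
Arguments lunit {s} : rename.
Arguments runit {s} : rename.
Arguments sym {s} : rename.
Notation "X (x) Y" := (tens X Y) (at level 35).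
Notation "f <x> g" := (tensm f g) (at level 35).

Record StrongMonad (C : SymMonCat) := {
  M : C -> C;
  fmap : forall X Y, hom X Y -> hom (M X) (M Y);
  fmap_id : forall X, fmap (idm X) = idm (M X);
  fmap_comp : forall X Y Z (g : hom Y Z) (f : hom X Y), fmap (g \o f) = fmap g \o fmap f;
  eta : forall X, hom X (M X);
  mu : forall X, hom (M (M X)) (M X);
  eta_nat : forall X Y (f : hom X Y), eta Y \o f = fmap f \o eta X;
  mu_nat : forall X Y (f : hom X Y), mu Y \o fmap (fmap f) = fmap f \o mu X;
  mu_eta_l : forall X, mu X \o eta (M X) = idm (M X);
  mu_eta_r : forall X, mu X \o fmap (eta X) = idm (M X);
  mu_assoc : forall X, mu X \o fmap (mu X) = mu X \o mu (M X);
  tau : forall X Y, hom (M X (x) Y) (M (X (x) Y));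
  tau_nat : forall X X' Y Y' (f : hom X X') (g : hom Y Y'),
      tau X' Y' \o (fmap f <x> g) = fmap (f <x> g) \o tau X Y;
  tau_runit : forall X, fmap (runit X) \o tau X unitI = runit (M X);
  tau_assoc : forall X Y Z,
      tau X (Y (x) Z) \o assoc (M X) Y Z
      = fmap (assoc X Y Z) \o tau (X (x) Y) Z \o (tau X Y <x> idm Z);
  tau_eta : forall X Y, tau X Y \o (eta X <x> idm Y) = eta (X (x) Y);
  tau_mu : forall X Y,
      tau X Y \o (mu X <x> idm Y) = mu (X (x) Y) \o fmap (tau X Y) \o tau (M X) Y
}.

Arguments M {C} s : rename.
Arguments fmap {C} s {X Y} : rename.
Arguments eta {C} s : rename.
Arguments mu {C} s : rename.
Arguments tau {C} s : rename.

Section Defs.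
Context {C : SymMonCat} (T : StrongMonad C).

Definition tau' (X Y : C) : hom (X (x) M T Y) (M T (X (x) Y)) :=
  fmap T (sym Y X) \o tau T Y X \o sym X (M T Y).

Definition commutative : Prop :=
  forall X Y : C,
    mu T (X (x) Y) \o fmap T (tau T X Y) \o tau' (M T X) Y
    = mu T (X (x) Y) \o fmap T (tau' X Y) \o tau T X (M T Y).

Definition EM_algebra (A : C) (a : hom (M T A) A) : Prop :=
  a \o eta T A = idm A /\ a \o fmap T a = a \o mu T A.

Definition monoid (A : C) (m : hom (A (x) A) A) (u : hom unitI A) : Prop :=
  m \o (m <x> idm A) = m \o (idm A <x> m) \o assoc A A A /\
  m \o (u <x> idm A) = lunit A /\
  m \o (idm A <x> u) = runit A.

Definition sym_EM_monoid (A : C) (a : hom (M T A) A) (m : hom (A (x) A) A)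
    (u : hom unitI A) : Prop :=
  EM_algebra a /\ monoid m u /\
      a \o fmap T m \o mu T (A (x) A) \o fmap T (tau' A A) \o tau T A (M T A)
      = m \o (a <x> a).

Definition EM_monoid (A : C) (a : hom (M T A) A) (m : hom (A (x) A) A)
    (u : hom unitI A) : Prop :=
  EM_algebra a /\ monoid m u /\
      m \o (a <x> idm A) = a \o fmap T m \o tau T A A.

End Defs.

Arguments tau' {C} T X Y.
Arguments commutative {C} T.
Arguments EM_algebra {C} T {A} a.
Arguments monoid {C} {A} m u.
Arguments sym_EM_monoid {C} T {A} a m u.
Arguments EM_monoid {C} T {A} a m u.


(* Precomposing the symmetric-monoid law with [idm ⊗ eta] turns [a ⊗ a] into
   [a ⊗ idm], since [a ∘ eta = idm], and collapses the double strength
   [mu ∘ M tau' ∘ tau] to [tau], by the unit law of the left strength.  What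
   remains is exactly the Eilenberg--Moore monoid law. *)

Section StrongMonadUnit.
Variables (C : SymMonCat) (T : StrongMonad C).

Lemma tau_nat_r (X Y Y' : C) (g : hom Y Y') :
  tau T X Y' \o (idm (M T X) <x> g) = fmap T (idm X <x> g) \o tau T X Y.
Proof. rewrite <- fmap_id. apply tau_nat. Qed.

Lemma tau'_eta (X Y : C) :
  tau' T X Y \o (idm X <x> eta T Y) = eta T (X (x) Y).
Proof.
  unfold tau'. rewrite <- !comp_assoc, sym_nat.
  rewrite (comp_assoc (tau T Y X)), tau_eta.
  rewrite (comp_assoc (fmap T (sym Y X))), <- eta_nat.
  rewrite <- comp_assoc, sym_inv. apply comp_id_r.
Qed.

Lemma double_strength_eta_r (X Y : C) :
  mu T (X (x) Y) \o fmap T (tau' T X Y) \o tau T X (M T Y) \o (idm (M T X) <x> eta T Y)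
  = tau T X Y.
Proof.
  rewrite <- comp_assoc, tau_nat_r, comp_assoc.
  rewrite <- (comp_assoc (mu T (X (x) Y))), <- fmap_comp, tau'_eta.
  rewrite mu_eta_r. apply comp_id_l.
Qed.

End StrongMonadUnit.

Theorem theorem18 (C : SymMonCat) (T : StrongMonad C) :
  commutative T ->
  forall (A : C) (a : hom (M T A) A) (m : hom (A (x) A) A) (u : hom unitI A),
    sym_EM_monoid T a m u -> EM_monoid T a m u.
Proof.
  intros _ A a m u [[a_eta a_mu] [m_monoid m_sym]].
  split; [split; assumption | split; [assumption |]].
  assert (a_idm : a <x> idm A = (a <x> a) \o (idm (M T A) <x> eta T A)).
  { rewrite <- tensm_comp, comp_id_r, a_eta. reflexivity. }
  rewrite a_idm, comp_assoc, <- m_sym.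
  rewrite <- !comp_assoc, (comp_assoc (mu T (A (x) A))), (comp_assoc (mu T (A (x) A) \o _)).
  rewrite double_strength_eta_r. reflexivity.
Qed.
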